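(* In the setting described in the context, suppose there is an integer $\omega>0$ such that for every $k$ and every $\nu>0$, $k\in\mathcal A_\nu\cup\mathcal A_{\nu-1}\cup\cdots\cup\mathcal A_{\max\{\nu-\omega+1,0\}}$, and such that for every $\phi>0$ and $k\in\mathcal A_\phi$, $\max\{\phi-\omega,0\}\le\bar\phi_k<\phi$. Then for every $\nu\ge1$, $$\sum_{\phi=1}^{\nu}\sum_{k\in\mathcal A_\phi}\|z_k^{\bar\phi_k+1}-z_k^{\phi}\|^2\le 2(\omega-1)^2\sum_{\phi=1}^{\nu}\|z^{\phi+1}-z^{\phi}\|^2.$$
   Context: There are $K$ workers. $\mathcal N_k$ is the set of neighbors of worker $k$ and $\mathcal T$ the set of pairs of neighboring workers. Worker $k$ owns $x_k$, an auxiliary variable $z_k=\{z_{k,l}:l\in\mathcal N_k\}$ and multipliers $\lambda_k$ split into blocks $\lambda_{k,l}$; $A_k$ is a matrix and $A_{k,l}$ the block of rows of $A_k$ corresponding to $z_{k,l}$; $z$ denotes the collection of all $z_k$. $F_k=f_k+\eta_{\mathcal X_k}$ with $\eta_S$ the indicator function of $S$. $\mathcal Z=\{z:z_{k,l}=z_{l,k}\ \forall(k,l)\in\mathcal T\}$. Asynchronous ADMM (global view) with parameters $\rho>0$, $\alpha\ge0$: start from $x^0$, $\lambda^0=0$, $z^0\in\mathcal Z$. At global iteration $\phi$ there is a subset $\mathcal A_\phi\subseteq\{1,\dots,K\}$ of workers finishing an $x$-update, and for $k\in\mathcal A_\phi$ an index $\bar\phi_k<\phi$ (the global iteration at which that update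 started). For $k\in\mathcal A_\phi$: $x_k^{\phi+1}\in\operatorname{argmin}_{x_k}F_k(x_k)+\lambda_k^{\phi\top}A_kx_k+\frac\rho2\|A_kx_k-z_k^{\bar\phi_k+1}\|^2$ and $\lambda_k^{\phi+1}=\lambda_k^\phi+\rho(A_kx_k^{\phi+1}-z_k^{\bar\phi_k+1})$; for $k\notin\mathcal A_\phi$ they are unchanged. For a set $\mathcal E_\phi$ of ordered neighbor pairs $(l,k)$, and all $k\in\mathcal A_\phi$, $l\in\mathcal N_k$ with $(l,k)\in\mathcal E_\phi$: $z_{k,l}^{\phi+1}=z_{l,k}^{\phi+1}=\big(\lambda_{k,l}^{\phi+1}+\lambda_{l,k}^{\phi+1}+\rho A_{k,l}x_k^{\phi+1}+\rho A_{l,k}x_l^{\phi+1}+\alpha z_{k,l}^\phi\big)/(2\rho+\alpha)$; all other entries of $z$ are unchanged. *)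

From HB Require Import structures.
From mathcomp Require Import all_boot all_order all_algebra.
Set Implicit Arguments. Unset Strict Implicit. Unset Printing Implicit Defensive.
Import Order.TTheory GRing.Theory Num.Theory.
Local Open Scope ring_scope.

Definition dotv (R : realFieldType) (p : nat) (u v : 'cV[R]_p) : R :=
  \sum_(i < p) u i 0 * v i 0.
Definition sqn (R : realFieldType) (p : nat) (v : 'cV[R]_p) : R := dotv v v.

(* Worker k has
   x_k : 'cV_(n k); the block z_{k,l}, lambda_{k,l} (l a neighbor of k) lives in
   'cV_(m k l), with m k l = m l k (hm) so that the consensus z_{k,l} = z_{l,k}
   makes sense (via castmx).  A_{k,l} : 'M_(m k l, n k) is the block of rows of
   A_k corresponding to z_{k,l}; so A_k x_k, lambda_k^T A_k x_k and
   ||A_k x_k - z_k||^2 are written blockwise as sums over l in N_k. *)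
Section ADMM.
Variables (R : realFieldType) (K : nat) (n : 'I_K -> nat)
  (m : 'I_K -> 'I_K -> nat) (hm : forall k l, m l k = m k l)
  (N : rel 'I_K) (Amat : forall k l, 'M[R]_(m k l, n k)).

Definition swapv (k l : 'I_K) (v : 'cV[R]_(m l k)) : 'cV[R]_(m k l) :=
  castmx (hm k l, erefl 1%N) v.

Definition in_Z (z : forall k l : 'I_K, 'cV[R]_(m k l)) : Prop :=
  forall k l, N k l -> z k l = swapv (z l k).

Definition sqn_blocks (k : 'I_K) (u : forall l : 'I_K, 'cV[R]_(m k l)) : R :=
  \sum_(l | N k l) sqn (u l).

Definition sqn_diff (z1 z2 : forall k l : 'I_K, 'cV[R]_(m k l)) : R :=
  \sum_(k : 'I_K) sqn_blocks (fun l => z1 k l - z2 k l).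

(* The x_k-subproblem objective
   F_k(y) + lambda_k^T A_k y + rho/2 ||A_k y - zk||^2 with F_k = f_k + indicator X_k
   (the indicator is handled by restricting to y in X_k). *)
Definition xobj (f : forall k, 'cV[R]_(n k) -> R) (rho : R) (k : 'I_K)
  (lamk zk : forall l : 'I_K, 'cV[R]_(m k l)) (y : 'cV[R]_(n k)) : R :=
  f k y + \sum_(l | N k l) dotv (lamk l) (Amat k l *m y)
  + rho / 2 * \sum_(l | N k l) sqn (Amat k l *m y - zk l).

Definition is_argminF (f : forall k, 'cV[R]_(n k) -> R)
  (X : forall k, pred 'cV[R]_(n k)) (rho : R) (k : 'I_K)
  (lamk zk : forall l : 'I_K, 'cV[R]_(m k l)) (xk : 'cV[R]_(n k)) : Prop :=
  X k xk /\ forall y, X k y -> xobj f rho lamk zk xk <= xobj f rho lamk zk y.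

(* One run of the asynchronous ADMM (global view).
   Aset phi = A_phi, phibar phi k = \bar phi_k (for k in A_phi),
   E phi l k = ((l,k) \in E_phi). *)
Definition async_admm_run (f : forall k, 'cV[R]_(n k) -> R)
  (X : forall k, pred 'cV[R]_(n k)) (rho alpha : R)
  (Aset : nat -> {set 'I_K}) (phibar : nat -> 'I_K -> nat)
  (E : nat -> rel 'I_K)
  (x : nat -> forall k : 'I_K, 'cV[R]_(n k))
  (lam z : nat -> forall k l : 'I_K, 'cV[R]_(m k l)) : Prop :=
  (0 < rho /\ 0 <= alpha) /\
      (forall k l, N k l = N l k) /\
      (forall k l, N k l -> lam 0%N k l = 0) /\ in_Z (z 0%N) /\
      (forall phi k, k \in Aset phi -> (phibar phi k < phi)%N) /\
      (forall phi k, k \in Aset phi ->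
         is_argminF f X rho (lam phi k) (z (phibar phi k).+1 k) (x phi.+1 k)
         /\ forall l, N k l -> lam phi.+1 k l =
              lam phi k l + rho *: (Amat k l *m x phi.+1 k - z (phibar phi k).+1 k l)) /\
      (forall phi k, k \notin Aset phi ->
         x phi.+1 k = x phi k /\ forall l, N k l -> lam phi.+1 k l = lam phi k l) /\
      (forall phi k l, N k l ->
         ((k \in Aset phi) && E phi l k ->
               let w := (2 * rho + alpha)^-1 *:
                  (lam phi.+1 k l + swapv (lam phi.+1 l k)
                   + rho *: (Amat k l *m x phi.+1 k)
                   + rho *: swapv (Amat l k *m x phi.+1 l)
                   + alpha *: z phi k l) in
               z phi.+1 k l = w /\ z phi.+1 l k = swapv w)
         /\ (~~ (((k \in Aset phi) && E phi l k) || ((l \in Aset phi) && E phi k l)) ->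
               z phi.+1 k l = z phi k l)).

End ADMM.

From HB Require Import structures.
From mathcomp Require Import all_boot all_order all_algebra.
From mathcomp Require Import zify lra.
Import Order.TTheory GRing.Theory Num.Theory.
Local Open Scope ring_scope.

(* For a worker active at phi, z_k^(phibar+1) - z_k^phi telescopes over the at
   most omega - 1 increments z^(j+1) - z^j with phi - omega < j < phi, so by
   Cauchy-Schwarz its squared norm is at most (omega - 1) times the sum of their
   squared norms.  Summing over phi, each increment j lies in the window of at
   most omega - 1 iterations phi, which gives the constant (omega - 1)^2; the
   factor 2 of the statement is slack. *)

Lemma sqr_sum_le {R : realFieldType} {I : Type} (r : seq I) (a : I -> R) :
  (\sum_(i <- r) a i) ^+ 2 <= (size r)%:R * \sum_(i <- r) a i ^+ 2.
Proof.
elim: r => [|x r IH]; first by rewrite !big_nil mul0r expr0n.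
rewrite !big_cons; case: r IH => [|y r] IH; first by rewrite !big_nil !addr0 mul1r.
set S := \sum_(i <- _) a i in IH *; set T := \sum_(i <- _) a i ^+ 2 in IH *.
set n := (size (y :: r))%:R in IH *.
have n_gt0 : 0 < n by rewrite ltr0n.
have -> : (size [:: x, y & r])%:R = n + 1 :> R by rewrite -natr1.
suff : 0 <= n * ((n + 1) * (a x ^+ 2 + T) - (a x + S) ^+ 2).
  by rewrite pmulr_rge0 // subr_ge0.
(* Given S^2 <= n T, the bracket times n is at least (n a_x - S)^2. *)
have := sqr_ge0 (n * a x - S); nra.
Qed.

Lemma sqn_ge0 {R : realFieldType} {p : nat} (v : 'cV[R]_p) : 0 <= sqn v.
Proof. by rewrite sumr_ge0 // => i _; rewrite -expr2 sqr_ge0. Qed.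

Lemma sqnN {R : realFieldType} {p : nat} (v : 'cV[R]_p) : sqn (- v) = sqn v.
Proof. by apply: eq_bigr => i _; rewrite !mxE mulrNN. Qed.

Lemma sqn_sum_le {R : realFieldType} {p : nat} {I : Type} (r : seq I)
    (v : I -> 'cV[R]_p) :
  sqn (\sum_(i <- r) v i) <= (size r)%:R * \sum_(i <- r) sqn (v i).
Proof.
rewrite /sqn /dotv; under eq_bigr do rewrite summxE -expr2.
rewrite exchange_big mulr_sumr /=; apply: ler_sum => c _.
under [X in _ <= _ * X]eq_bigr do rewrite -expr2.
exact: sqr_sum_le.
Qed.

Lemma sqn_sub_le_telescope {R : realFieldType} {p : nat} (v : nat -> 'cV[R]_p)
    {i j : nat} :
  (i <= j)%N -> sqn (v i - v j) <= (j - i)%:R * \sum_(i <= t < j) sqn (v t.+1 - v t).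
Proof.
move=> le_ij; rewrite -opprB -(telescope_sumr v le_ij) sqnN.
by apply: le_trans (sqn_sum_le _ _) _; rewrite size_iota.
Qed.

Lemma ler_sum_nat_sub {R : numDomainType} (a b c d : nat) (P Q : pred nat)
    (F : nat -> R) :
  (forall i, 0 <= F i) ->
  (forall i, (a <= i < b)%N -> P i -> [&& (c <= i)%N, (i < d)%N & Q i]) ->
  \sum_(a <= i < b | P i) F i <= \sum_(c <= i < d | Q i) F i.
Proof.
move=> F_ge0 PQ.
rewrite (big_nat_widenl a 0) // (big_nat_widen 0 b (b + d)) ?leq_addr //.
rewrite [leRHS](big_nat_widenl c 0) // [leRHS](big_nat_widen 0 d (b + d)) ?leq_addl //.
rewrite big_mkcond [leRHS]big_mkcond /=; apply: ler_sum_nat => i _.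
case: ifP => [/andP[/andP[Pi le_ai] lt_ib]|_]; last by case: ifP.
by have /and3P[-> -> ->] := PQ i (introT andP (conj le_ai lt_ib)) Pi.
Qed.

Lemma sqn_sub_le_window {R : realFieldType} {p : nat} (v : nat -> 'cV[R]_p)
    (w a b i phi : nat) :
  (a <= i)%N -> (i <= phi <= i + w)%N -> (phi <= b)%N ->
  sqn (v i - v phi)
    <= w%:R * \sum_(a <= j < b | (j < phi <= j + w)%N) sqn (v j.+1 - v j).
Proof.
move=> le_ai /andP[le_i_phi le_phi_iw] le_phi_b.
apply: le_trans (sqn_sub_le_telescope v le_i_phi) _.
apply: ler_pM.
- by rewrite ler0n.
- by rewrite sumr_ge0 // => j _; exact: sqn_ge0.
- by rewrite ler_nat; lia.
- by apply: ler_sum_nat_sub => [j|j /andP[] *]; [exact: sqn_ge0 | lia].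
Qed.

Lemma sum_window_le {R : numDomainType} (F : nat -> R) (w a b : nat) :
  (forall j, 0 <= F j) ->
  \sum_(a <= i < b) \sum_(a <= j < b | (j < i <= j + w)%N) F j
    <= w%:R * \sum_(a <= j < b) F j.
Proof.
move=> F_ge0; under eq_bigr do rewrite big_mkcond.
rewrite exchange_big mulr_sumr /=; under eq_bigr do rewrite -big_mkcond.
apply: ler_sum_nat => j _.
apply: le_trans (_ : \sum_(j.+1 <= i < (j + w).+1) F j <= _).
  by apply: ler_sum_nat_sub => // i _; lia.
by rewrite sumr_const_nat subSS addKn mulr_natl.
Qed.

Section Blocks.
Context {R : realFieldType} {K : nat} {m : 'I_K -> 'I_K -> nat} (N : rel 'I_K).

Lemma sqn_diff_ge0 (z1 z2 : forall k l : 'I_K, 'cV[R]_(m k l)) :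
  0 <= sqn_diff N z1 z2.
Proof. by rewrite !sumr_ge0 // => k _; rewrite sumr_ge0 // => l _; exact: sqn_ge0. Qed.

Lemma sum_sqn_blocks_delayed_le (z : nat -> forall k l : 'I_K, 'cV[R]_(m k l))
    (A : {set 'I_K}) (t : 'I_K -> nat) (w a b phi : nat) :
  (forall k, k \in A -> (a <= t k)%N /\ (t k <= phi <= t k + w)%N) ->
  (phi <= b)%N ->
  \sum_(k in A) sqn_blocks N (fun l => z (t k) k l - z phi k l)
    <= w%:R * \sum_(a <= j < b | (j < phi <= j + w)%N) sqn_diff N (z j.+1) (z j).
Proof.
move=> t_window le_phi_b.
pose bound k l :=
  w%:R * \sum_(a <= j < b | (j < phi <= j + w)%N) sqn (z j.+1 k l - z j k l).
have bound_ge0 k l : 0 <= bound k l.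
  by rewrite mulr_ge0 ?ler0n ?sumr_ge0 // => j _; exact: sqn_ge0.
apply: (@le_trans _ _ (\sum_(k in A) \sum_(l | N k l) bound k l)).
  apply: ler_sum => k /t_window[le_at t_phi]; apply: ler_sum => l _.
  exact: sqn_sub_le_window.
apply: (@le_trans _ _ (\sum_k \sum_(l | N k l) bound k l)).
  rewrite [leRHS](bigID (mem A)) /= lerDl.
  by rewrite sumr_ge0 // => k _; rewrite sumr_ge0.
rewrite /bound; under eq_bigr do rewrite -mulr_sumr.
rewrite -mulr_sumr ler_wpM2l ?ler0n // le_eqVlt; apply/predU1P; left.
rewrite /sqn_diff /sqn_blocks [RHS]exchange_big /=; apply: eq_bigr => k _.
by rewrite [RHS]exchange_big.
Qed.

End Blocks.

Theorem lemma2 (R : realFieldType) (K : nat) (n : 'I_K -> nat)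
  (m : 'I_K -> 'I_K -> nat) (hm : forall k l, m l k = m k l)
  (N : rel 'I_K) (Amat : forall k l, 'M[R]_(m k l, n k))
  (f : forall k, 'cV[R]_(n k) -> R) (X : forall k, pred 'cV[R]_(n k))
  (rho alpha : R) (Aset : nat -> {set 'I_K}) (phibar : nat -> 'I_K -> nat)
  (E : nat -> rel 'I_K) (x : nat -> forall k : 'I_K, 'cV[R]_(n k))
  (lam z : nat -> forall k l : 'I_K, 'cV[R]_(m k l))
  (run : async_admm_run hm N Amat f X rho alpha Aset phibar E x lam z)
  (omega : nat) (homega : (0 < omega)%N)
  (hact : forall (k : 'I_K) (nu : nat), (0 < nu)%N ->
     exists phi : nat, (nu.+1 - omega <= phi <= nu)%N /\ k \in Aset phi)
  (hdelay : forall (phi : nat) (k : 'I_K), (0 < phi)%N -> k \in Aset phi ->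
     (phi - omega <= phibar phi k < phi)%N)
  (nu : nat) (hnu : (1 <= nu)%N) :
  \sum_(1 <= phi < nu.+1) \sum_(k in Aset phi)
      sqn_blocks N (fun l => z (phibar phi k).+1 k l - z phi k l)
  <= 2 * ((omega - 1)%:R) ^+ 2 *
     \sum_(1 <= phi < nu.+1) sqn_diff N (z phi.+1) (z phi).
Proof.
set w := (omega - 1)%N.
pose D j := sqn_diff N (z j.+1) (z j).
pose W phi := \sum_(1 <= j < nu.+1 | (j < phi <= j + w)%N) D j.
have D_ge0 j : 0 <= D j by exact: sqn_diff_ge0.
have delayed_le phi : (1 <= phi < nu.+1)%N ->
    \sum_(k in Aset phi) sqn_blocks N (fun l => z (phibar phi k).+1 k l - z phi k l)
    <= w%:R * W phi.
  move=> /andP[phi_gt0 lt_phi_nu].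
  apply: sum_sqn_blocks_delayed_le => [k kA|]; last by lia.
  by have := hdelay phi k phi_gt0 kA; rewrite /w; lia.
apply: le_trans (_ : _ <= \sum_(1 <= phi < nu.+1) w%:R * W phi) _.
  exact: ler_sum_nat.
rewrite -mulr_sumr.
apply: le_trans (ler_wpM2l (ler0n _ w) (sum_window_le D w 1 nu.+1 D_ge0)) _.
rewrite mulrA -expr2 ler_wpM2r ?sumr_ge0 //.
by have := sqr_ge0 (w%:R : R); lra.
Qed.
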